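(* For $n=1,2,3,4$ the minimal norm of a linear interpolation projector on the unit ball satisfies $\theta_1(B_1)=1$, $\theta_2(B_2)=\frac53$, $\theta_3(B_3)=2$, $\theta_4(B_4)=\frac{11}5$, i.e. $\theta_n(B_n)=3-\frac4{n+1}$; moreover, for $n\le4$ an interpolation projector $P:C(B_n)\to\Pi_1(\mathbb R^n)$ with nodes in $B_n$ satisfies $\|P\|_{B_n}=\theta_n(B_n)$ only if its nodes are the vertices of a regular simplex inscribed into $B_n$.
   Context: $B_n$ is the closed unit Euclidean ball in $\mathbb R^n$. $C(B_n)$ is the space of continuous functions with sup norm; $\Pi_1(\mathbb R^n)$ the space of polynomials of degree $\le1$. For nodes $x^{(1)},\dots,x^{(n+1)}\in B_n$ forming a nondegenerate simplex, the interpolation projector $P$ maps $f$ to the unique $p\in\Pi_1(\mathbb R^n)$ with $p(x^{(j)})=f(x^{(j)})$; $\|P\|_{B_n}$ is its operator norm. $\theta_n(B_n)$ is the minimum of $\|P\|_{B_n}$ over all such projectors. A simplex is inscribed into $B_n$ if its vertices lie on the unit sphere. *)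

From HB Require Import structures.
From mathcomp Require Import all_boot all_order all_algebra.
From mathcomp Require Import boolp classical_sets reals.
Set Implicit Arguments.
Unset Strict Implicit.
Unset Printing Implicit Defensive.
Import Order.TTheory GRing.Theory Num.Theory.
Local Open Scope ring_scope.
Local Open Scope classical_set_scope.

Section Defs.
Variable R : realType.

Definition dotv (n : nat) (x y : 'rV[R]_n) : R := \sum_(i < n) x 0 i * y 0 i.
Definition enorm (n : nat) (x : 'rV[R]_n) : R := Num.sqrt (dotv x x).

Definition in_ball (n : nat) (x : 'rV[R]_n) : Prop := enorm x <= 1.

Definition cont_on_ball (n : nat) (f : 'rV[R]_n -> R) : Prop :=
  forall x, in_ball x -> forall e : R, 0 < e ->
    exists2 d : R, 0 < d &
      forall y, in_ball y -> enorm (y - x) < d -> `|f y - f x| < e.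

Definition affine_eval (n : nat) (a : 'rV[R]_n) (c : R) (x : 'rV[R]_n) : R :=
  c + dotv a x.

(* Nodes x^(1..n+1) form a nondeg_simplex simplex: the matrix with rows
   (x^(j), 1) is invertible. *)
Definition node_matrix (n : nat) (X : 'I_n.+1 -> 'rV[R]_n) : 'M[R]_(n.+1, n.+1) :=
  \matrix_(j < n.+1, k < n.+1)
    (if (k < n)%N as b return ((k < n)%N = b -> R) then
        fun h => X j 0 (Ordinal h) else fun _ => 1) (erefl _).
Definition nondeg_simplex (n : nat) (X : 'I_n.+1 -> 'rV[R]_n) : Prop :=
  \det (node_matrix X) != 0.

Definition nodes_in_ball (n : nat) (X : 'I_n.+1 -> 'rV[R]_n) : Prop :=
  forall j, in_ball (X j).

(* Operator norm ||P||_{B_n} of the interpolation projector with nodes X: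
   sup of |(Pf)(x)| over x in B_n and f in C(B_n) with ||f||_{C(B_n)} <= 1,
   where Pf is the (unique, by nondegeneracy) p in Pi_1 with p(X j) = f(X j). *)
Definition proj_norm (n : nat) (X : 'I_n.+1 -> 'rV[R]_n) : R :=
  sup [set r | exists (f : 'rV[R]_n -> R) (a : 'rV[R]_n) (c : R) (x : 'rV[R]_n),
        [/\ cont_on_ball f,
            (forall y, in_ball y -> `|f y| <= 1),
            (forall j, affine_eval a c (X j) = f (X j)),
            in_ball x &
            r = `|affine_eval a c x| ] ].

Definition theta_ball (n : nat) : R :=
  inf [set r | exists X : 'I_n.+1 -> 'rV[R]_n,
        [/\ nondeg_simplex X, nodes_in_ball X & r = proj_norm X] ].

Definition regular_inscribed (n : nat) (X : 'I_n.+1 -> 'rV[R]_n) : Prop :=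
  (forall j, enorm (X j) = 1) /\
  (forall i j k l, i != j -> k != l -> enorm (X i - X j) = enorm (X k - X l)).

End Defs.

(* Let [lambda_j = C j + <A j, .>] be the Lagrange basis of the nodes [x_j].
   Testing [P] on the truncation to [[-1, 1]] of [1 - 2 lambda_j] at the point of
   the ball where [lambda_j] is minimal gives [||P|| >= 2 (|A j| + <A j, x_j>) - 1].
   Since [sum_j <A j, x_j> = n] and [|A j| >= <A j, x_j>], summing over [j] gives
   [(n + 1) ||P|| >= 3 n - 1]. Equality forces [|A j| = <A j, x_j> = n / (n + 1)]:
   every node is a unit vector parallel to [A j], and [lambda_i (x_j) = 0] then
   fixes all the inner products [<x_i, x_j>] at [-1/n].
   Conversely, for the regular inscribed simplex [||P||] is the maximum over the
   ball of [sum_j |lambda_j|]. If [J] is the set of the [k] indices with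
   [lambda_j (x) < 0], this sum is [1 - 2 sum_J lambda_j (x)], which is at most
   [1 - 2 (k - n |sum_J x_j|) / (n + 1)]; and [n^2 |sum_J x_j|^2 = n k (n + 1 - k)],
   which is at most [(n - 1 + k)^2] for every [k] if and only if [n <= 4]. *)

From HB Require Import structures.
From mathcomp Require Import all_boot all_order all_algebra.
From mathcomp Require Import boolp classical_sets reals.
From mathcomp Require Import ring lra.
Import Order.TTheory GRing.Theory Num.Theory.
Set Implicit Arguments.
Unset Strict Implicit.
Unset Printing Implicit Defensive.
Local Open Scope ring_scope.

Section Euclid.
Variables (R : realType) (n : nat).
Implicit Types (u v x : 'rV[R]_n) (k : R).

Lemma dotvC u v : dotv u v = dotv v u.
Proof. by apply: eq_bigr => i _; rewrite mulrC. Qed.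

Lemma dotvDl u v x : dotv (u + v) x = dotv u x + dotv v x.
Proof. by rewrite /dotv -big_split; apply: eq_bigr => i _; rewrite mxE mulrDl. Qed.

Lemma dotvZl k u x : dotv (k *: u) x = k * dotv u x.
Proof. by rewrite /dotv mulr_sumr; apply: eq_bigr => i _; rewrite mxE mulrA. Qed.

Lemma dotvBl u v x : dotv (u - v) x = dotv u x - dotv v x.
Proof. by rewrite dotvDl -scaleN1r dotvZl mulN1r. Qed.

Lemma dotv0l x : dotv 0 x = 0.
Proof. by rewrite -(scale0r 0) dotvZl mul0r. Qed.

Lemma dotv_suml (I : finType) (P : pred I) (F : I -> 'rV[R]_n) x :
  dotv (\sum_(i | P i) F i) x = \sum_(i | P i) dotv (F i) x.
Proof.
rewrite /dotv exchange_big /=; apply: eq_bigr => i _.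
by rewrite summxE mulr_suml.
Qed.

Lemma dotvDr u v x : dotv x (u + v) = dotv x u + dotv x v.
Proof. by rewrite dotvC dotvDl !(dotvC x). Qed.

Lemma dotvZr k u x : dotv x (k *: u) = k * dotv x u.
Proof. by rewrite dotvC dotvZl dotvC. Qed.

Lemma dotvBr u v x : dotv x (u - v) = dotv x u - dotv x v.
Proof. by rewrite dotvC dotvBl !(dotvC x). Qed.

Lemma dotv0r x : dotv x 0 = 0.
Proof. by rewrite dotvC dotv0l. Qed.

Lemma dotv_ge0 u : 0 <= dotv u u.
Proof. by apply: sumr_ge0 => i _; rewrite -expr2 sqr_ge0. Qed.

Lemma dotv_eq0 u : (dotv u u == 0) = (u == 0).
Proof.
apply/eqP/eqP => [|->]; last exact: dotv0l.
move=> /eqP; rewrite psumr_eq0 => [/allP u0|i _]; last by rewrite -expr2 sqr_ge0.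
apply/rowP => i; rewrite mxE; apply/eqP.
by have := u0 i (mem_index_enum _); rewrite -expr2 sqrf_eq0.
Qed.

Lemma enorm_sqr u : enorm u ^+ 2 = dotv u u.
Proof. by rewrite sqr_sqrtr // dotv_ge0. Qed.

Lemma enorm_ge0 u : 0 <= enorm u.
Proof. exact: sqrtr_ge0. Qed.

Lemma enormZ k u : enorm (k *: u) = `|k| * enorm u.
Proof.
by rewrite /enorm dotvZl dotvZr mulrA -expr2 sqrtrM ?sqr_ge0 // sqrtr_sqr.
Qed.

Lemma dotv_sqr_le u x : dotv u x ^+ 2 <= dotv u u * dotv x x.
Proof.
have [/eqP|xn0] := eqVneq (dotv x x) 0.
  by rewrite dotv_eq0 => /eqP ->; rewrite !dotv0r expr0n mulr0.
have xx_gt0 : 0 < dotv x x by rewrite lt_def xn0 dotv_ge0.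
have := dotv_ge0 (dotv x x *: u - dotv u x *: x).
rewrite !(dotvBl, dotvBr, dotvZl, dotvZr) (dotvC x u) => h.
have : 0 <= dotv x x * (dotv u u * dotv x x - dotv u x ^+ 2) by nra.
by rewrite pmulr_rge0 // subr_ge0.
Qed.

Lemma dotv_le u x : `|dotv u x| <= enorm u * enorm x.
Proof.
rewrite -(@ler_pXn2r _ 2) ?nnegrE ?mulr_ge0 ?enorm_ge0 //.
by rewrite exprMn !enorm_sqr real_normK ?num_real // dotv_sqr_le.
Qed.

Lemma dotv_le_enorm u x : in_ball x -> dotv u x <= enorm u.
Proof.
move=> xb; apply: le_trans (ler_norm _) _; apply: le_trans (dotv_le _ _) _.
by rewrite ler_piMr ?enorm_ge0.
Qed.

(* Equality case of Cauchy-Schwarz: [|u - |u| x|^2 = |u|^2 (|x|^2 - 1) <= 0]. *)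
Lemma dotv_eq_enorm u x :
  in_ball x -> dotv u x = enorm u -> u = enorm u *: x.
Proof.
move=> xb ux; apply/eqP; rewrite -subr_eq0 -dotv_eq0 eq_le dotv_ge0 andbT.
rewrite !(dotvBl, dotvBr, dotvZl, dotvZr) (dotvC x u) ux -!enorm_sqr.
have x_le1 : enorm x ^+ 2 <= 1 by rewrite expr_le1 ?enorm_ge0.
have := sqr_ge0 (enorm u); nra.
Qed.

Lemma enorm0 : enorm (0 : 'rV[R]_n) = 0.
Proof. by rewrite /enorm dotv0l sqrtr0. Qed.

Lemma ball_dotv_opp_enorm (a : 'rV[R]_n) :
  exists2 x, in_ball x & dotv a x = - enorm a.
Proof.
have [a0|a_neq0] := eqVneq (enorm a) 0.
  by exists 0; rewrite /in_ball ?enorm0 ?dotv0r ?a0 ?oppr0.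
exists (- (enorm a)^-1 *: a).
  by rewrite /in_ball enormZ normrN ger0_norm ?invr_ge0 ?enorm_ge0 // mulVf.
by rewrite dotvZr -enorm_sqr mulNr expr2 mulKf.
Qed.

End Euclid.

Lemma natr1_gt0 {R : numDomainType} (n : nat) : 0 < n%:R + 1 :> R.
Proof. by rewrite ltr_wpDl ?ler0n. Qed.

Section Interpolation.
Variables (R : realType) (n : nat).
Implicit Types (X : 'I_n.+1 -> 'rV[R]_n) (a x : 'rV[R]_n) (c : R).

Lemma node_matrix_widen X j (i : 'I_n) :
  node_matrix X j (widen_ord (leqnSn n) i) = X j 0 i.
Proof.
rewrite mxE /=.
generalize (erefl (i < n)%N); generalize (i < n)%N at 2 3 => b.
case: b => lt_in; last by rewrite ltn_ord in lt_in.
by congr (X j 0 _); apply: val_inj.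
Qed.

Lemma node_matrix_max X j : node_matrix X j ord_max = 1.
Proof.
rewrite mxE /=.
generalize (erefl (n < n)%N); generalize (n < n)%N at 2 3 => b.
by case: b => // lt_nn; have := lt_nn; rewrite ltnn.
Qed.

(* An affine function [x |-> c + <a, x>] is encoded by the column [(a, c)], so
   that its values at the nodes form the column [node_matrix X *m (a, c)]. *)
Definition affine_col a c : 'cV[R]_n.+1 :=
  \col_k (if unlift ord_max k is Some i then a 0 i else c).
Definition col_lin (w : 'cV[R]_n.+1) : 'rV[R]_n :=
  \row_i w (widen_ord (leqnSn n) i) 0.
Definition col_const (w : 'cV[R]_n.+1) : R := w ord_max 0.

Lemma col_lin_affine a c : col_lin (affine_col a c) = a.
Proof.
apply/rowP => i; rewrite !mxE.
have -> : widen_ord (leqnSn n) i = lift ord_max i.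
  exact/val_inj/esym/lift_max.
by rewrite liftK.
Qed.

Lemma col_const_affine a c : col_const (affine_col a c) = c.
Proof. by rewrite /col_const mxE unlift_none. Qed.

Lemma node_matrix_mulmx X w j :
  (node_matrix X *m w) j 0 = affine_eval (col_lin w) (col_const w) (X j).
Proof.
rewrite mxE big_ord_recr /= node_matrix_max mul1r /affine_eval addrC.
by congr (_ + _); apply: eq_bigr => i _; rewrite node_matrix_widen mxE mulrC.
Qed.

Lemma node_matrix_unit X : nondeg_simplex X -> node_matrix X \in unitmx.
Proof. by rewrite unitmxE unitfE. Qed.

Lemma affine_eval0 x : affine_eval 0 0 x = 0.
Proof. by rewrite /affine_eval dotv0l addr0. Qed.

Lemma affine_eq0_of_nodes X a c : nondeg_simplex X ->
  (forall k, affine_eval a c (X k) = 0) -> a = 0 /\ c = 0.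
Proof.
move=> /node_matrix_unit X_unit ac0.
have Xw0 : node_matrix X *m affine_col a c = 0.
  apply/matrixP => k l.
  by rewrite ord1 node_matrix_mulmx col_lin_affine col_const_affine ac0 mxE.
have w0 : affine_col a c = 0 by rewrite -(mulKmx X_unit (affine_col a c)) Xw0 mulmx0.
split; first by rewrite -(col_lin_affine a c) w0; apply/rowP => i; rewrite !mxE.
by rewrite -(col_const_affine a c) w0 /col_const mxE.
Qed.

Definition lagrange_basis X (A : 'I_n.+1 -> 'rV[R]_n) (C : 'I_n.+1 -> R) :=
  forall j k, affine_eval (A j) (C j) (X k) = (k == j)%:R.

Lemma lagrange_basis_exists X : nondeg_simplex X ->
  exists A C, lagrange_basis X A C.
Proof.
move=> /node_matrix_unit X_unit.
pose w j := invmx (node_matrix X) *m (delta_mx j 0 : 'cV[R]_n.+1).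
exists (fun j => col_lin (w j)), (fun j => col_const (w j)) => j k.
by rewrite -node_matrix_mulmx mulKVmx // mxE eqxx andbT.
Qed.

Section LagrangeBasis.
Variables (X : 'I_n.+1 -> 'rV[R]_n) (A : 'I_n.+1 -> 'rV[R]_n) (C : 'I_n.+1 -> R).
Hypotheses (X_nondeg : nondeg_simplex X) (AC_basis : lagrange_basis X A C).

Lemma affine_eval_lagrange a c x :
  affine_eval a c x = \sum_j affine_eval a c (X j) * affine_eval (A j) (C j) x.
Proof.
pose f j := affine_eval a c (X j).
have sum_eval y : affine_eval (a - \sum_j f j *: A j) (c - \sum_j f j * C j) y =
    affine_eval a c y - \sum_j f j * affine_eval (A j) (C j) y.
  rewrite /affine_eval dotvBl dotv_suml.
  under [X in _ = _ - X]eq_bigr => j _ do rewrite mulrDr.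
  under [X in dotv a y - X]eq_bigr => j _ do rewrite dotvZl.
  rewrite big_split /=; ring.
have [a0 c0] : a - \sum_j f j *: A j = 0 /\ c - \sum_j f j * C j = 0.
  apply: affine_eq0_of_nodes X_nondeg _ => k; rewrite sum_eval.
  rewrite (bigD1 k) //= AC_basis eqxx mulr1 big1 ?addr0 ?subrr // => j /negbTE.
  by rewrite AC_basis eq_sym => ->; rewrite mulr0.
by move: (sum_eval x); rewrite a0 c0 affine_eval0 => /esym/eqP; rewrite subr_eq0 => /eqP.
Qed.

Lemma lagrange_sum1 x : \sum_j affine_eval (A j) (C j) x = 1.
Proof.
rewrite [RHS](_ : 1 = affine_eval 0 1 x); last by rewrite /affine_eval dotv0l addr0.
rewrite (affine_eval_lagrange 0 1 x); apply: eq_bigr => j _.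
by rewrite /affine_eval dotv0l addr0 mul1r.
Qed.

Lemma lagrange_sum_dotv_nodes : \sum_j dotv (A j) (X j) = n%:R.
Proof.
have sumC : \sum_j C j = 1.
  rewrite -(lagrange_sum1 0); apply: eq_bigr => j _.
  by rewrite /affine_eval dotv0r addr0.
have : \sum_j (C j + dotv (A j) (X j)) = n.+1%:R.
  under eq_bigr => j _ do rewrite -/(affine_eval _ _ _) AC_basis eqxx.
  by rewrite sumr_const card_ord.
rewrite big_split /= sumC => sum_eq.
by apply: (addrI 1); rewrite sum_eq -[n.+1%:R]natr1 addrC.
Qed.

End LagrangeBasis.
End Interpolation.

Section Clamp.
Variable R : realType.
Implicit Types u v z : R.

(* [clamp z = Num.max (-1) (Num.min z 1)] *)
Definition clamp z := (`|z + 1| - `|z - 1|) / 2.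

Lemma clamp_lipschitz u v : `|clamp u - clamp v| <= `|u - v|.
Proof.
rewrite /clamp -mulrBl normrM normfV normr_nat ler_pdivrMr //.
have -> : `|u + 1| - `|u - 1| - (`|v + 1| - `|v - 1|) =
          (`|u + 1| - `|v + 1|) - (`|u - 1| - `|v - 1|) by ring.
rewrite (le_trans (ler_normB _ _)) //.
have := ler_dist_dist (u + 1) (v + 1); have := ler_dist_dist (u - 1) (v - 1).
have -> : u + 1 - (v + 1) = u - v by ring.
have -> : u - 1 - (v - 1) = u - v by ring.
lra.
Qed.

Lemma clamp_bound z : `|clamp z| <= 1.
Proof.
rewrite /clamp normrM normfV normr_nat ler_pdivrMr // mul1r.
have := ler_dist_dist (z + 1) (z - 1).
have -> : z + 1 - (z - 1) = 2 by ring.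
by rewrite normr_nat.
Qed.

Lemma clamp_id z : `|z| <= 1 -> clamp z = z.
Proof.
rewrite ler_norml => /andP [z_ge z_le].
rewrite /clamp (ger0_norm (_ : 0 <= z + 1)); last lra.
rewrite (ler0_norm (_ : z - 1 <= 0)); last lra.
by field.
Qed.
End Clamp.

Section ProjNorm.
Variables (R : realType) (n : nat).
Implicit Types (X : 'I_n.+1 -> 'rV[R]_n) (a x y : 'rV[R]_n) (c : R).

Definition proj_values X : set R :=
  [set r | exists (f : 'rV[R]_n -> R) (a : 'rV[R]_n) (c : R) (x : 'rV[R]_n),
        [/\ cont_on_ball f,
            (forall y, in_ball y -> `|f y| <= 1),
            (forall j, affine_eval a c (X j) = f (X j)),
            in_ball x &
            r = `|affine_eval a c x| ] ].

Lemma proj_normE X : proj_norm X = sup (proj_values X).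
Proof. by []. Qed.

Lemma affine_eval_le a c x : in_ball x -> `|affine_eval a c x| <= `|c| + enorm a.
Proof.
move=> xb; rewrite (le_trans (ler_normD _ _)) // lerD2l.
by rewrite (le_trans (dotv_le _ _)) // ler_piMr ?enorm_ge0.
Qed.

Lemma cont_on_ball_clamp_affine a c :
  cont_on_ball (fun y => clamp (affine_eval a c y)).
Proof.
move=> x _ e e_gt0.
have na_gt0 : 0 < enorm a + 1 by rewrite ltr_wpDl ?enorm_ge0.
exists (e / (enorm a + 1)) => [|y _ xy]; first exact: divr_gt0.
apply: le_lt_trans (clamp_lipschitz _ _) _.
rewrite /affine_eval opprD addrACA subrr add0r -dotvBr.
apply: le_lt_trans (dotv_le _ _) _.
rewrite ltr_pdivlMr // in xy.
have := enorm_ge0 (y - x); have := enorm_ge0 a; nra.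
Qed.

Section Nodes.
Variables (X : 'I_n.+1 -> 'rV[R]_n) (A : 'I_n.+1 -> 'rV[R]_n) (C : 'I_n.+1 -> R).
Hypotheses (X_nondeg : nondeg_simplex X) (X_ball : nodes_in_ball X).
Hypothesis AC_basis : lagrange_basis X A C.

Lemma proj_values_ubound : has_ubound (proj_values X).
Proof.
exists (\sum_k (`|C k| + enorm (A k))) => _ [f [a [c [x [_ f_le1 af xb ->]]]]].
rewrite (affine_eval_lagrange X_nondeg AC_basis) (le_trans (ler_norm_sum _ _ _)) //.
apply: ler_sum => k _; rewrite normrM af -[leRHS]mul1r.
by rewrite ler_pM ?normr_ge0 ?f_le1 ?affine_eval_le.
Qed.

Lemma proj_norm_ge_node j :
  2 * (enorm (A j) + dotv (A j) (X j)) - 1 <= proj_norm X.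
Proof.
have Cj : C j = 1 - dotv (A j) (X j).
  by have := AC_basis j j; rewrite eqxx /affine_eval /=; lra.
have [x0 x0b ax0] := ball_dotv_opp_enorm (A j).
pose g := affine_eval (-2 *: A j) (1 - 2 * C j).
have gE y : g y = 1 - 2 * affine_eval (A j) (C j) y.
  by rewrite /g /affine_eval dotvZl; ring.
apply: le_trans (_ : `|g x0| <= _); last first.
  rewrite proj_normE; apply: (ub_le_sup proj_values_ubound).
  exists (fun y => clamp (g y)), (-2 *: A j), (1 - 2 * C j), x0; split => //.
  - exact: cont_on_ball_clamp_affine.
  - by move=> y _; apply: clamp_bound.
  - move=> k; rewrite clamp_id // gE AC_basis ler_norml.
    by apply/andP; split; case: (k == j); rewrite /= ?mulr1 ?mulr0; lra.
suff -> : g x0 = 2 * (enorm (A j) + dotv (A j) (X j)) - 1 by apply: ler_norm.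
by rewrite gE /affine_eval ax0 Cj; ring.
Qed.

Lemma proj_norm_le_lebesgue (M : R) :
  (forall x, in_ball x -> \sum_j `|affine_eval (A j) (C j) x| <= M) ->
  proj_norm X <= M.
Proof.
move=> lebesgue_le; rewrite proj_normE; apply: ge_sup.
  exists 0, (fun _ => 0), 0, 0, 0; split.
  - by move=> x _ e e_gt0; exists 1 => // y _ _; rewrite subrr normr0.
  - by move=> y _; rewrite normr0.
  - by move=> k; rewrite affine_eval0.
  - by rewrite /in_ball enorm0.
  - by rewrite affine_eval0 normr0.
move=> _ [f [a [c [x [_ f_le1 af xb ->]]]]].
rewrite (affine_eval_lagrange X_nondeg AC_basis).
apply: le_trans (ler_norm_sum _ _ _) (le_trans _ (lebesgue_le x xb)).
apply: ler_sum => k _; rewrite normrM af -[leRHS]mul1r.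
by rewrite ler_wpM2r ?normr_ge0 ?f_le1.
Qed.

End Nodes.
End ProjNorm.

Section LowerBound.
Variables (R : realType) (n : nat).
Variables (X : 'I_n.+1 -> 'rV[R]_n) (A : 'I_n.+1 -> 'rV[R]_n) (C : 'I_n.+1 -> R).
Hypotheses (X_nondeg : nondeg_simplex X) (X_ball : nodes_in_ball X).
Hypothesis AC_basis : lagrange_basis X A C.

Let m : R := n%:R / (n%:R + 1).

Lemma three_sub_four_div : 3 - 4 / n.+1%:R = 4 * m - 1 :> R.
Proof. by rewrite -[n.+1%:R]natr1 /m; field; rewrite gt_eqF ?natr1_gt0. Qed.

Lemma proj_norm_ge_lagrange : 3 - 4 / n.+1%:R <= proj_norm X.
Proof.
have node_sum : \sum_j (2 * (enorm (A j) + dotv (A j) (X j)) - 1) <=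
                \sum_(j < n.+1) proj_norm X.
  by apply: ler_sum => j _; apply: proj_norm_ge_node.
have norm_sum : n%:R <= \sum_j enorm (A j).
  rewrite -(lagrange_sum_dotv_nodes X_nondeg AC_basis).
  by apply: ler_sum => j _; apply: dotv_le_enorm.
rewrite sumrB -mulr_sumr big_split /= (lagrange_sum_dotv_nodes X_nondeg AC_basis)
  !sumr_const !card_ord -[proj_norm X *+ _]mulr_natl -[n.+1%:R]natr1 in node_sum.
rewrite three_sub_four_div -(ler_pM2l (natr1_gt0 n)) /m.
have -> : (n%:R + 1) * (4 * (n%:R / (n%:R + 1)) - 1) = 3 * n%:R - 1 :> R.
  by field; rewrite gt_eqF ?natr1_gt0.
lra.
Qed.

Lemma lagrange_extremal : proj_norm X <= 3 - 4 / n.+1%:R ->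
  forall j, enorm (A j) = m /\ dotv (A j) (X j) = m.
Proof.
move=> extremal.
have gap_node j : 0 <= 2 * m - enorm (A j) - dotv (A j) (X j).
  have := proj_norm_ge_node X_nondeg X_ball AC_basis j.
  by rewrite three_sub_four_div in extremal; lra.
have gap_cs j : 0 <= enorm (A j) - dotv (A j) (X j).
  by rewrite subr_ge0 dotv_le_enorm.
have gap_sum : \sum_j ((2 * m - enorm (A j) - dotv (A j) (X j)) +
                       (enorm (A j) - dotv (A j) (X j))) = 0.
  transitivity (\sum_j (2 * m - 2 * dotv (A j) (X j))).
    by apply: eq_bigr => j _; ring.
  rewrite sumrB sumr_const card_ord -mulr_sumr.
  rewrite (lagrange_sum_dotv_nodes X_nondeg AC_basis).
  rewrite -[2 * m *+ _]mulr_natr -[n.+1%:R]natr1 /m.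
  by field; rewrite gt_eqF ?natr1_gt0.
move=> j; have gaps_ge0 i (_ : predT i) := addr_ge0 (gap_node i) (gap_cs i).
have := @psumr_eq0P _ _ predT _ gaps_ge0 gap_sum j isT.
have := gap_node j; have := gap_cs j; lra.
Qed.

Lemma regular_inscribed_of_lagrange : (0 < n)%N ->
  proj_norm X <= 3 - 4 / n.+1%:R -> regular_inscribed X.
Proof.
move=> n_gt0 /lagrange_extremal extremal.
have m_gt0 : 0 < m by rewrite divr_gt0 ?ltr0n ?natr1_gt0.
have AX j : A j = m *: X j.
  have [nA dA] := extremal j.
  by rewrite {1}(dotv_eq_enorm (X_ball j) (etrans dA (esym nA))) nA.
have X_unit j : enorm (X j) = 1.
  have [+ _] := extremal j; rewrite AX enormZ gtr0_norm // => nX.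
  by apply: (mulfI (lt0r_neq0 m_gt0)); rewrite mulr1.
have Cm j : C j = 1 - m.
  have [_ dA] := extremal j.
  by have := AC_basis j j; rewrite eqxx /affine_eval dA /=; lra.
have dotvX i j : i != j -> dotv (X i) (X j) = - n%:R^-1.
  move=> ij; have := AC_basis i j.
  rewrite eq_sym (negbTE ij) /affine_eval Cm AX dotvZl /= => lam_ij.
  apply: (mulfI (lt0r_neq0 m_gt0)); rewrite (_ : m * _ = m - 1); last lra.
  have n_neq0 : n%:R != 0 :> R by rewrite pnatr_eq0 -lt0n.
  by rewrite /m; field; rewrite n_neq0 (lt0r_neq0 (natr1_gt0 n)).
have dist i j : i != j -> enorm (X i - X j) = Num.sqrt (2 + 2 / n%:R).
  move=> ij; rewrite /enorm !(dotvBl, dotvBr) (dotvC (X j) (X i)) (dotvX _ _ ij).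
  by rewrite -!enorm_sqr !X_unit; congr Num.sqrt; ring.
by split => // i j k l ij kl; rewrite !dist.
Qed.

End LowerBound.

Section AnyNodes.
Variables (R : realType) (n : nat) (X : 'I_n.+1 -> 'rV[R]_n).
Hypotheses (X_nondeg : nondeg_simplex X) (X_ball : nodes_in_ball X).

Lemma proj_norm_ge : 3 - 4 / n.+1%:R <= proj_norm X.
Proof.
have [A [C AC_basis]] := lagrange_basis_exists X_nondeg.
exact: proj_norm_ge_lagrange X_nondeg X_ball AC_basis.
Qed.

Lemma regular_inscribed_of_proj_norm_le : (0 < n)%N ->
  proj_norm X <= 3 - 4 / n.+1%:R -> regular_inscribed X.
Proof.
have [A [C AC_basis]] := lagrange_basis_exists X_nondeg.
exact: regular_inscribed_of_lagrange X_nondeg X_ball AC_basis.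
Qed.

End AnyNodes.

Section Gram.
Variables (R : realType) (n : nat).

Lemma dotv_delta (i i' : 'I_n) :
  dotv (delta_mx 0 i) (delta_mx 0 i' : 'rV[R]_n) = (i == i')%:R.
Proof.
rewrite /dotv (bigD1 i) //= big1 => [|k ki]; last by rewrite !mxE (negbTE ki) mul0r.
by rewrite !mxE !eqxx mul1r addr0.
Qed.

Lemma dotv_delta_const (i : 'I_n) :
  dotv (delta_mx 0 i) (const_mx 1 : 'rV[R]_n) = 1.
Proof.
rewrite /dotv (bigD1 i) //= big1 => [|k ki]; last by rewrite !mxE (negbTE ki) mul0r.
by rewrite !mxE !eqxx mulr1 addr0.
Qed.

Lemma dotv_const : dotv (const_mx 1) (const_mx 1 : 'rV[R]_n) = n%:R.
Proof.
by rewrite /dotv (eq_bigr (fun=> 1)) ?sumr_const ?card_ord // => i _; rewrite !mxE mulr1.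
Qed.

Variables (I : finType) (Y : I -> 'rV[R]_n) (alpha beta : R).
Hypothesis Y_gram : forall j k, dotv (Y j) (Y k) = alpha * (j == k)%:R - beta.

Lemma dotv_gram_comb (v : I -> R) :
  dotv (\sum_j v j *: Y j) (\sum_j v j *: Y j) =
  alpha * \sum_j v j ^+ 2 - beta * (\sum_j v j) ^+ 2.
Proof.
set S := \sum_k v k.
rewrite dotv_suml (eq_bigr (fun j => alpha * v j ^+ 2 - beta * S * v j)).
  by rewrite sumrB -!mulr_sumr -/S; ring.
move=> j _; transitivity (v j * (alpha * v j - beta * S)); last by ring.
rewrite dotvZl dotvC dotv_suml; congr (_ * _).
under eq_bigr => k _ do rewrite dotvZl dotvC Y_gram mulrBr.
rewrite sumrB -mulr_suml [beta * _]mulrC; congr (_ - _).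
rewrite (bigD1 j) //= eqxx mulr1 big1 ?addr0 => [|k kj]; first by rewrite mulrC.
by rewrite eq_sym (negbTE kj) mulr0n !mulr0.
Qed.

End Gram.

Lemma nondeg_simplex_gram (R : realType) (n : nat) (X : 'I_n.+1 -> 'rV[R]_n)
    (alpha beta : R) : 0 < alpha ->
  (forall j k, dotv (X j) (X k) = alpha * (j == k)%:R - beta) -> nondeg_simplex X.
Proof.
move=> alpha_gt0 X_gram; apply/negP => /det0P [v v_neq0 vX0].
have comb0 : \sum_j v 0 j *: X j = 0.
  apply/rowP => i; rewrite summxE mxE.
  have := congr1 (fun A : 'rV[R]_n.+1 => A 0 (widen_ord (leqnSn n) i)) vX0.
  rewrite /= !mxE => vX0_i; apply: etrans vX0_i; apply: eq_bigr => j _.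
  by rewrite node_matrix_widen !mxE.
have sum0 : \sum_j v 0 j = 0.
  have := congr1 (fun A : 'rV[R]_n.+1 => A 0 ord_max) vX0.
  rewrite /= !mxE => vX0_i; apply: etrans vX0_i; apply: eq_bigr => j _.
  by rewrite node_matrix_max mulr1.
have := dotv_gram_comb X_gram (v 0).
rewrite comb0 dotv0l sum0 expr0n mulr0 subr0 => /esym/eqP.
rewrite mulf_eq0 (gt_eqF alpha_gt0) /= psumr_eq0 => [/allP v0|j _]; last exact: sqr_ge0.
move/eqP: v_neq0; apply; apply/rowP => j; rewrite mxE; apply/eqP.
by have := v0 j (mem_index_enum _); rewrite sqrf_eq0.
Qed.

Section RegularSimplex.
Variables (R : realType) (n : nat).

(* Vertex [n] is [gam (1, ..., 1)] and vertex [i < n] is [alp e_i + bet (1, ..., 1)];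
   [alp + n bet = - gam] puts the centroid at the origin, and [alp ^ 2 = 1 + 1/n],
   [gam ^ 2 = 1/n] make the Gram matrix [(1 + 1/n) I - 1/n]. *)
Let alp : R := Num.sqrt (1 + n%:R^-1).
Let gam : R := Num.sqrt n%:R^-1.
Let bet : R := - (alp + gam) / n%:R.

Definition regular_simplex (j : 'I_n.+1) : 'rV[R]_n :=
  if unlift ord_max j is Some i then alp *: delta_mx 0 i + bet *: const_mx 1
  else gam *: const_mx 1.

Hypothesis n_gt0 : (0 < n)%N.

Let n_neq0 : n%:R != 0 :> R. Proof. by rewrite pnatr_eq0 -lt0n. Qed.

Let alp_sqr : alp ^+ 2 = 1 + n%:R^-1.
Proof. by rewrite sqr_sqrtr // addr_ge0 ?invr_ge0 ?ler0n. Qed.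

Let gam_sqr : gam ^+ 2 = n%:R^-1.
Proof. by rewrite sqr_sqrtr // invr_ge0 ler0n. Qed.

Let gram_base : 2 * alp * bet + bet ^+ 2 * n%:R = - n%:R^-1.
Proof.
transitivity ((gam ^+ 2 - alp ^+ 2) / n%:R); first by rewrite /bet; field.
by rewrite alp_sqr gam_sqr; field.
Qed.

Let gram_apex_base : alp * gam + bet * gam * n%:R = - n%:R^-1.
Proof.
transitivity (- gam ^+ 2); first by rewrite /bet; field.
by rewrite gam_sqr.
Qed.

Let gram_apex : gam ^+ 2 * n%:R = 1.
Proof. by rewrite gam_sqr mulVf. Qed.

Lemma dotv_regular_simplex j k :
  dotv (regular_simplex j) (regular_simplex k) = (1 + n%:R^-1) * (j == k)%:R - n%:R^-1.
Proof.
rewrite /regular_simplex.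
case: (unliftP ord_max j) => [i ->|->]; case: (unliftP ord_max k) => [i' ->|->];
  rewrite !(dotvDl, dotvDr, dotvZl, dotvZr) ?dotv_const ?dotv_delta ?dotv_delta_const
          ?(dotvC (const_mx 1)) ?dotv_delta_const.
- transitivity (alp ^+ 2 * (i == i')%:R + (2 * alp * bet + bet ^+ 2 * n%:R)).
    by ring.
  by rewrite (inj_eq lift_inj) alp_sqr gram_base; ring.
- transitivity (alp * gam + bet * gam * n%:R); first by ring.
  by rewrite gram_apex_base eq_sym (negbTE (neq_lift _ _)) mulr0 sub0r.
- transitivity (alp * gam + bet * gam * n%:R); first by ring.
  by rewrite gram_apex_base (negbTE (neq_lift _ _)) mulr0 sub0r.
- transitivity (gam ^+ 2 * n%:R); first by ring.
  by rewrite gram_apex eqxx mulr1 addrK.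
Qed.

Lemma enorm_regular_simplex j : enorm (regular_simplex j) = 1.
Proof. by rewrite /enorm dotv_regular_simplex eqxx mulr1 addrK sqrtr1. Qed.

Lemma regular_simplex_nondeg : nondeg_simplex regular_simplex.
Proof.
apply: nondeg_simplex_gram dotv_regular_simplex.
by rewrite ltr_wpDr ?invr_ge0 ?ler0n.
Qed.

Lemma regular_simplex_lagrange :
  lagrange_basis regular_simplex
    (fun j => (n%:R / (n%:R + 1)) *: regular_simplex j) (fun=> (n%:R + 1)^-1).
Proof.
move=> j k; rewrite /affine_eval dotvZl dotv_regular_simplex eq_sym.
by field; rewrite n_neq0 gt_eqF ?natr1_gt0.
Qed.

Lemma enorm_regular_simplex_sum (P : pred 'I_n.+1) :
  (n%:R * enorm (\sum_(j | P j) regular_simplex j)) ^+ 2 =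
  n%:R * #|P|%:R * (n%:R + 1 - #|P|%:R).
Proof.
have sumP : \sum_(j | P j) regular_simplex j = \sum_j (P j)%:R *: regular_simplex j.
  by rewrite big_mkcond; apply: eq_bigr => j _; case: (P j); rewrite ?scale1r ?scale0r.
have cardP : \sum_j (P j)%:R = #|P|%:R :> R.
  rewrite -sum1_card natr_sum [RHS]big_mkcond; apply: eq_bigr => j _.
  by rewrite unfold_in; case: (P j).
rewrite exprMn enorm_sqr sumP (dotv_gram_comb dotv_regular_simplex).
rewrite (eq_bigr (fun j => (P j)%:R)) => [|j _]; first by rewrite cardP; field.
by case: (P j); rewrite ?expr1n ?expr0n.
Qed.

End RegularSimplex.

Lemma sum_norm_of_sum1 (R : realFieldType) (I : finType) (F : I -> R) :
  \sum_i F i = 1 -> \sum_i `|F i| = 1 - 2 * \sum_(i | F i < 0) F i.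
Proof.
move=> F1; rewrite (bigID (fun i => F i < 0)) /=.
rewrite (eq_bigr (fun i => - F i)) => [|i /ltr0_norm //].
rewrite [X in _ + X](eq_bigr F) => [|i]; last by rewrite -leNgt => /ger0_norm.
move: F1; rewrite (bigID (fun i => F i < 0)) /= sumrN; lra.
Qed.

(* The only place where [n <= 4] is needed: for [n = 5, k = 2] it reads [40 <= 36]. *)
Lemma regular_simplex_card_ineq (R : realFieldType) (n k : nat) :
  (1 <= n <= 4)%N -> (k <= n.+1)%N ->
  n%:R * k%:R * (n%:R + 1 - k%:R) <= (n%:R - 1 + k%:R) ^+ 2 :> R.
Proof.
case: n => [//|[|[|[|[|//]]]]] _;
case: k => [|[|[|[|[|[|//]]]]]] _; rewrite ?expr2; lra.
Qed.

Section UpperBound.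
Variables (R : realType) (n : nat).
Hypothesis n_range : (1 <= n <= 4)%N.

Let X := @regular_simplex R n.
Let lam j x := affine_eval ((n%:R / (n%:R + 1)) *: X j) (n%:R + 1)^-1 x.

Lemma lebesgue_regular_simplex_le x :
  in_ball x -> \sum_j `|lam j x| <= 3 - 4 / n.+1%:R.
Proof.
move=> xb.
have n_gt0 : (0 < n)%N by case/andP: n_range.
rewrite /lam (sum_norm_of_sum1 (lagrange_sum1 (regular_simplex_nondeg R n_gt0)
  (regular_simplex_lagrange R n_gt0) x)) -/(lam _ x).
set P := fun j => lam j x < 0; set K : R := #|P|%:R.
set V := \sum_(j | P j) X j.
have sumP : \sum_(j | P j) lam j x = (n%:R + 1)^-1 * (K + n%:R * dotv V x).
  rewrite /lam /affine_eval big_split /= sumr_const dotv_suml -[_^-1 *+ _]mulr_natl.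
  under eq_bigr => j _ do rewrite dotvZl.
  by rewrite -mulr_sumr /K; field; rewrite gt_eqF ?natr1_gt0.
have V_le : n%:R * enorm V <= n%:R - 1 + K.
  rewrite -(@ler_pXn2r _ 2) ?nnegrE ?mulr_ge0 ?ler0n ?enorm_ge0 //; last first.
    by rewrite addr_ge0 ?ler0n // subr_ge0 ler1n.
  rewrite enorm_regular_simplex_sum //; apply: regular_simplex_card_ineq => //.
  by have := max_card P; rewrite card_ord.
have Vx : - (n%:R * enorm V) <= n%:R * dotv V x.
  rewrite -mulrN ler_wpM2l ?ler0n //.
  have := dotv_le V x; rewrite ler_norml => /andP [+ _].
  have : enorm x <= 1 := xb; have := enorm_ge0 V; nra.
rewrite sumP -(ler_pM2l (natr1_gt0 n)).
have -> : (n%:R + 1) * (1 - 2 * ((n%:R + 1)^-1 * (K + n%:R * dotv V x))) =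
          n%:R + 1 - 2 * K - 2 * (n%:R * dotv V x) :> R.
  by field; rewrite gt_eqF ?natr1_gt0.
have -> : (n%:R + 1) * (3 - 4 / n.+1%:R) = 3 * n%:R - 1 :> R.
  by rewrite -[n.+1%:R]natr1; field; rewrite gt_eqF ?natr1_gt0.
lra.
Qed.

Lemma proj_norm_regular_simplex_le : proj_norm X <= 3 - 4 / n.+1%:R.
Proof.
have n_gt0 : (0 < n)%N by case/andP: n_range.
apply: proj_norm_le_lebesgue (regular_simplex_nondeg R n_gt0) _
  (regular_simplex_lagrange R n_gt0) _ lebesgue_regular_simplex_le.
by move=> j; rewrite /in_ball enorm_regular_simplex.
Qed.

End UpperBound.

Section Theta.
Variables (R : realType) (n : nat).

Definition theta_values : set R :=
  [set r | exists X : 'I_n.+1 -> 'rV[R]_n,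
        [/\ nondeg_simplex X, nodes_in_ball X & r = proj_norm X] ].

Lemma theta_ballE : theta_ball R n = inf theta_values.
Proof. by []. Qed.

Lemma theta_values_ge : lbound theta_values (3 - 4 / n.+1%:R).
Proof. by move=> _ [X [X_nondeg X_ball ->]]; apply: proj_norm_ge. Qed.

End Theta.

Theorem mainTheorem14 (R : realType) (n : nat) :
  (1 <= n <= 4)%N ->
  theta_ball R n = 3 - 4 / (n.+1)%:R /\
  (forall X : 'I_n.+1 -> 'rV[R]_n,
     nondeg_simplex X -> nodes_in_ball X ->
     proj_norm X = theta_ball R n -> regular_inscribed X).
Proof.
move=> n_range; have n_gt0 : (0 < n)%N by case/andP: n_range.
pose Xr := @regular_simplex R n.
have Xr_in : @theta_values R n (proj_norm Xr).
  exists Xr; split=> // [|j]; first exact: regular_simplex_nondeg.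
  by rewrite /in_ball enorm_regular_simplex.
have theta : theta_ball R n = 3 - 4 / n.+1%:R.
  have theta_lb : has_lbound (@theta_values R n).
    by exists (3 - 4 / n.+1%:R); apply: theta_values_ge.
  rewrite theta_ballE; apply/eqP; rewrite eq_le; apply/andP; split.
    exact: le_trans (ge_inf theta_lb Xr_in) (proj_norm_regular_simplex_le R n_range).
  by apply: lb_le_inf (@theta_values_ge R n); exists (proj_norm Xr).
split=> // X X_nondeg X_ball; rewrite theta => X_opt.
by apply: regular_inscribed_of_proj_norm_le; rewrite ?X_opt.
Qed.
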